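(* The following five $8$-dimensional complex Lie algebras are mutually non-isomorphic. Each has basis $\mathbf x_1,\dots,\mathbf x_6,\mathbf y_1,\mathbf y_2$, with the listed nonzero brackets (together with those obtained by antisymmetry) and all other brackets of basis elements equal to zero: (1) $N^{8,2}_1$: $[\mathbf x_1,\mathbf x_2]=\mathbf y_1$, $[\mathbf x_3,\mathbf x_4]=\mathbf y_2$, $[\mathbf x_5,\mathbf x_6]=\mathbf y_1+\mathbf y_2$; (2) $N^{8,2}_2$: $[\mathbf x_5,\mathbf x_2]=[\mathbf x_6,\mathbf x_1]=\mathbf y_1$, $[\mathbf x_5,\mathbf x_3]=[\mathbf x_6,\mathbf x_4]=\mathbf y_2$; (3) $N^{8,2}_3$: $[\mathbf x_1,\mathbf x_2]=[\mathbf x_6,\mathbf x_5]=\mathbf y_1$, $[\mathbf x_3,\mathbf x_6]=[\mathbf x_5,\mathbf x_4]=\mathbf y_2$; (4) $N^{8,2}_4$: $[\mathbf x_1,\mathbf x_2]=[\mathbf x_3,\mathbf x_6]=[\mathbf x_5,\mathbf x_4]=\mathbf y_1$, $[\mathbf x_6,\mathbf x_5]=\mathbf y_2$; (5) $N^{8,2}_5$: $[\mathbf x_1,\mathbf x_6]=[\mathbf x_3,\mathbf x_4]=[\mathbf x_5,\mathbf x_2]=\mathbf y_1$, $[\mathbf x_6,\mathbf x_3]=[\mathbf x_4,\mathbf x_5]=\mathbf y_2$. *)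

(* Complex numbers: C := R[i] = complex R for R : realType
   (mathcomp-real-closed's complex numbers over the reals). *)
From HB Require Import structures.
From mathcomp Require Import all_boot all_order all_algebra.
From mathcomp Require Import reals complex.
Set Implicit Arguments. Unset Strict Implicit. Unset Printing Implicit Defensive.
Import Order.TTheory GRing.Theory Num.Theory.
Local Open Scope ring_scope.

Section LieSC.
Variable F : fieldType.
Variable n : nat.

(* structure constants: [e_i, e_j] = c i j, for the standard basis e_i of F^n
   (vectors are coordinate rows 'rV[F]_n) *)
Definition structure_constants := 'I_n -> 'I_n -> 'rV[F]_n.

Definition lie_br (c : structure_constants) (u v : 'rV[F]_n) : 'rV[F]_n :=
  \sum_(i < n) \sum_(j < n) (u 0 i * v 0 j) *: c i j.

Definition lie_isomorphic (c1 c2 : structure_constants) : Prop :=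
  exists A : 'M[F]_n, A \in unitmx /\
    forall u v : 'rV[F]_n, lie_br c2 (u *m A) (v *m A) = lie_br c1 u v *m A.

Definition bvec (k : nat) : 'rV[F]_n := \row_(j < n) ((j : nat) == k)%:R.

(* structure constants from a list of nonzero brackets [e_a, e_b] = w
   (0-based indices), extended by antisymmetry, all others zero *)
Definition sc_of_list (l : seq (nat * nat * 'rV[F]_n)) : structure_constants :=
  fun i j => \sum_(t <- l)
     (((t.1.1 == i) && (t.1.2 == j))%:R *: t.2
      - ((t.1.1 == j) && (t.1.2 == i))%:R *: t.2).
End LieSC.

(* Basis x_1..x_6, y_1, y_2 of C^8: x_k has index k-1, y_k has index k+5. *)
Definition xi (k : nat) : nat := k.-1.
Definition yv (F : fieldType) (k : nat) : 'rV[F]_8 := bvec F 8 (k + 5).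

Section N82.
Variable F : fieldType.
Local Notation y := (yv F).

Definition N82_1 : structure_constants F 8 := sc_of_list
  [:: (xi 1, xi 2, y 1); (xi 3, xi 4, y 2); (xi 5, xi 6, y 1 + y 2)].
Definition N82_2 : structure_constants F 8 := sc_of_list
  [:: (xi 5, xi 2, y 1); (xi 6, xi 1, y 1); (xi 5, xi 3, y 2); (xi 6, xi 4, y 2)].
Definition N82_3 : structure_constants F 8 := sc_of_list
  [:: (xi 1, xi 2, y 1); (xi 6, xi 5, y 1); (xi 3, xi 6, y 2); (xi 5, xi 4, y 2)].
Definition N82_4 : structure_constants F 8 := sc_of_list
  [:: (xi 1, xi 2, y 1); (xi 3, xi 6, y 1); (xi 5, xi 4, y 1); (xi 6, xi 5, y 2)].
Definition N82_5 : structure_constants F 8 := sc_of_list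
  [:: (xi 1, xi 6, y 1); (xi 3, xi 4, y 1); (xi 5, xi 2, y 1);
      (xi 6, xi 3, y 2); (xi 4, xi 5, y 2)].

Definition N82 (k : nat) : structure_constants F 8 :=
  match k with
  | 1 => N82_1 | 2 => N82_2 | 3 => N82_3 | 4 => N82_4 | _ => N82_5
  end.
End N82.

(* Each linear functional f on the algebra, written as a column vector, gives the
   alternating form w_f(u, v) = f([u, v]), and an isomorphism maps these forms and the
   centre onto each other.  In the five algebras every bracket lies in span(y1, y2), so
   w_f depends only on (f(y1), f(y2)) and is a combination of the forms w_1, w_2 of the
   functionals dual to y1, y2.  Four isomorphism invariants then separate them:
   - some w_f has radical equal to the centre: N1 (w_1 + w_2; this needs 2 <> 0), but
     not N2, where w_f = ξ5 ∧ (a ξ2 + b ξ3) + ξ6 ∧ (a ξ1 + b ξ4), with (ξk) dual to (x_k)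
     and (a, b) = (f(y1), f(y2)), has rank at most 4;
   - three pairwise independent w_f have radical larger than the centre: N1 and N2,
     not N3, N4, N5;
   - two such forms exist: N3, not N4, N5;
   - some nonzero w_f has rank 2: N4, not N5.
   The negative statements are linear algebra on the explicit forms: a degenerate w_f
   forces f(y1) = 0 or f(y2) = 0 in N3, and f(y1) = 0 in N4 and N5, so two degenerate
   forms sharing the vanishing coordinate are proportional to w_2 (or w_1). *)

From HB Require Import structures.
From mathcomp Require Import all_boot all_order all_algebra.
From mathcomp Require Import reals complex.
From mathcomp Require Import ring.
Set Implicit Arguments. Unset Strict Implicit. Unset Printing Implicit Defensive.
Import GRing.Theory Num.Theory.
Local Open Scope ring_scope.

Section BracketForms.
Variables (F : fieldType) (n : nat).
Implicit Types (c : structure_constants F n) (f g h : 'cV[F]_n) (u v : 'rV[F]_n).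

Definition br_form c f u v : F := (lie_br c u v *m f) 0 0.

Definition central c u := forall v, lie_br c u v = 0.

Definition radical c f u := forall v, br_form c f u v = 0.

Definition degenerate_form c f := exists2 u, radical c f u & ~ central c u.

Definition independent_forms c f g := forall a b : F,
  (forall u v, a * br_form c f u v + b * br_form c g u v = 0) -> a = 0 /\ b = 0.

Definition has_nondegenerate_form c :=
  exists f, forall u, radical c f u -> central c u.

Definition has_two_degenerate_forms c := exists f g,
  [/\ degenerate_form c f, degenerate_form c g & independent_forms c f g].

Definition has_three_degenerate_forms c := exists f g h,
  [/\ degenerate_form c f, degenerate_form c g, degenerate_form c h &
      [/\ independent_forms c f g, independent_forms c f h & independent_forms c g h]].

(* The Plücker identity states [w /\ w = 0] for [w := br_form c f], i.e. [w] has rank 2. *)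
Definition has_rank2_form c := exists f, (exists u v, br_form c f u v != 0) /\
  forall a b x d, br_form c f a b * br_form c f x d - br_form c f a x * br_form c f b d
                  + br_form c f a d * br_form c f b x = 0.

Lemma has_two_of_three_degenerate_forms c :
  has_three_degenerate_forms c -> has_two_degenerate_forms c.
Proof. by case=> f [g [h [df dg _ [ifg _ _]]]]; exists f, g. Qed.

Lemma noncentral_of_br_form c f u v (a : F) : a != 0 -> br_form c f u v = a -> ~ central c u.
Proof.
by move=> a_nz uv_a u_central; move: a_nz; rewrite -uv_a /br_form u_central mul0mx mxE eqxx.
Qed.

Lemma degenerate_form_of c f u g v (a : F) : a != 0 ->
  radical c f u -> br_form c g u v = a -> degenerate_form c f.
Proof.
by move=> a_nz rad uv_a; exists u; last exact: noncentral_of_br_form a_nz uv_a.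
Qed.

Lemma independent_forms_of_dual c f g u1 v1 u2 v2 :
  br_form c f u1 v1 = 1 -> br_form c g u1 v1 = 0 ->
  br_form c f u2 v2 = 0 -> br_form c g u2 v2 = 1 -> independent_forms c f g.
Proof.
move=> f1 g1 f2 g2 a b ab0; split.
  by have := ab0 u1 v1; rewrite f1 g1 mulr1 mulr0 addr0.
by have := ab0 u2 v2; rewrite f2 g2 mulr1 mulr0 add0r.
Qed.

Lemma not_independent_of_proportional c f g h (a b : F) :
  (forall u v, br_form c f u v = a * br_form c h u v) ->
  (forall u v, br_form c g u v = b * br_form c h u v) -> ~ independent_forms c f g.
Proof.
move=> fh gh fg_indep.
have [_ /eqP] : b = 0 /\ - a = 0 by apply: fg_indep => u v; rewrite fh gh; ring.
rewrite oppr_eq0 => /eqP a0.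
have [] := fg_indep 1 0 => [u v|]; first by rewrite fh a0; ring.
by move/eqP; rewrite oner_eq0.
Qed.

Definition lie_invariant (P : structure_constants F n -> Prop) :=
  forall c1 c2, lie_isomorphic c1 c2 -> P c1 -> P c2.

Lemma lie_isomorphic_sym c1 c2 : lie_isomorphic c1 c2 -> lie_isomorphic c2 c1.
Proof.
case=> A [A_unit A_iso]; exists (invmx A); split; first by rewrite unitmx_inv.
by move=> u v; have := A_iso (u *m invmx A) (v *m invmx A); rewrite !mulmxKV // => ->;
  rewrite mulmxK.
Qed.

Section Transport.
Variables (c1 c2 : structure_constants F n) (A : 'M[F]_n).
Hypothesis A_unit : A \in unitmx.
Hypothesis A_iso : forall u v, lie_br c2 (u *m A) (v *m A) = lie_br c1 u v *m A.

Lemma br_form_iso f u v :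
  br_form c2 (invmx A *m f) u v = br_form c1 f (u *m invmx A) (v *m invmx A).
Proof.
by rewrite /br_form -{1}(mulmxKV A_unit u) -{1}(mulmxKV A_unit v) A_iso mulmxA mulmxK.
Qed.

Lemma central_iso u : central c2 u <-> central c1 (u *m invmx A).
Proof.
split=> u_central v.
  by apply: (can_inj (mulmxK A_unit)); rewrite -A_iso mulmxKV // u_central mul0mx.
by rewrite -(mulmxKV A_unit u) -(mulmxKV A_unit v) A_iso u_central mul0mx.
Qed.

Lemma radical_iso f u : radical c2 (invmx A *m f) u <-> radical c1 f (u *m invmx A).
Proof.
split=> rad v; last by rewrite br_form_iso.
by rewrite -(mulmxK A_unit v) -br_form_iso.
Qed.

Lemma degenerate_form_iso f : degenerate_form c1 f -> degenerate_form c2 (invmx A *m f).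
Proof.
by case=> u rad nc; exists (u *m A); rewrite ?radical_iso ?central_iso mulmxK.
Qed.

Lemma independent_forms_iso f g :
  independent_forms c1 f g -> independent_forms c2 (invmx A *m f) (invmx A *m g).
Proof.
move=> fg_indep a b ab0; apply: fg_indep => u v.
by have := ab0 (u *m A) (v *m A); rewrite !br_form_iso !mulmxK.
Qed.

End Transport.

Lemma has_nondegenerate_form_invariant : lie_invariant has_nondegenerate_form.
Proof.
move=> c1 c2 [A [A_unit A_iso]] [f rad_central]; exists (invmx A *m f) => u.
by move/(radical_iso A_unit A_iso)/rad_central/(central_iso A_unit A_iso).
Qed.

Lemma has_two_degenerate_forms_invariant : lie_invariant has_two_degenerate_forms.
Proof.
move=> c1 c2 [A [A_unit A_iso]] [f [g [df dg fg]]].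
by exists (invmx A *m f), (invmx A *m g); split;
  [apply: degenerate_form_iso.. | apply: independent_forms_iso].
Qed.

Lemma has_three_degenerate_forms_invariant : lie_invariant has_three_degenerate_forms.
Proof.
move=> c1 c2 [A [A_unit A_iso]] [f [g [h [df dg dh [fg fh gh]]]]].
exists (invmx A *m f), (invmx A *m g), (invmx A *m h).
by split; [apply: degenerate_form_iso.. | split; apply: independent_forms_iso].
Qed.

Lemma has_rank2_form_invariant : lie_invariant has_rank2_form.
Proof.
move=> c1 c2 [A [A_unit A_iso]] [f [[u [v nz]] pluecker]]; exists (invmx A *m f).
split=> [|a b x d]; last by rewrite !(br_form_iso A_unit A_iso).
by exists (u *m A), (v *m A); rewrite (br_form_iso A_unit A_iso) !mulmxK.
Qed.

End BracketForms.

Section StructureConstantLists.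
Variables (F : fieldType) (n : nat).

Lemma sum_nat_delta (a : nat) (G : 'I_n.+1 -> F) : (a < n.+1)%N ->
  \sum_(i < n.+1) (a == i)%:R * G i = G (inord a).
Proof.
move=> lt_a; rewrite (bigD1 (inord a)) //= inordK // eqxx mul1r big1 ?addr0 //.
move=> i ne_i; case: (a =P i) => [a_i|_]; last by rewrite mul0r.
suff i_a : i = inord a by rewrite i_a eqxx in ne_i.
by apply/val_inj; rewrite /= -a_i inordK.
Qed.

Lemma bvec_mulmx k (f : 'cV[F]_n.+1) :
  (k < n.+1)%N -> (bvec F n.+1 k *m f) 0 0 = f (inord k) 0.
Proof.
move=> lt_k; rewrite mxE -(sum_nat_delta (fun j => f j 0) lt_k).
by apply: eq_bigr => j _; rewrite mxE eq_sym.
Qed.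

Definition wedge (u v : 'rV[F]_n.+1) (a b : nat) : F :=
  u 0 (inord a) * v 0 (inord b) - u 0 (inord b) * v 0 (inord a).

Variable l : seq (nat * nat * 'rV[F]_n.+1).
Hypothesis l_bounded : all (fun t => (t.1.1 < n.+1) && (t.1.2 < n.+1))%N l.

Lemma lie_br_sc_of_list u v :
  lie_br (sc_of_list l) u v = \sum_(t <- l) wedge u v t.1.1 t.1.2 *: t.2.
Proof.
have delta2 a b : (a < n.+1)%N -> (b < n.+1)%N ->
    \sum_(i < n.+1) \sum_(j < n.+1) u 0 i * v 0 j * ((a == i) && (b == j))%:R
    = u 0 (inord a) * v 0 (inord b).
  move=> lt_a lt_b; rewrite -(sum_nat_delta (u 0) lt_a) mulr_suml.
  apply: eq_bigr => i _; rewrite -(sum_nat_delta (v 0) lt_b) mulr_sumr.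
  by apply: eq_bigr => j _; rewrite -mulnb natrM; ring.
elim: l l_bounded => [_|t s IHs /= /andP[/andP[lt_a lt_b] s_bounded]].
  rewrite big_nil /lie_br /sc_of_list big1 // => i _.
  by rewrite big1 // => j _; rewrite big_nil scaler0.
rewrite big_cons -IHs // /lie_br /sc_of_list /wedge -!delta2 //.
rewrite scalerBl !scaler_suml -sumrB -big_split /=; apply: eq_bigr => i _.
rewrite !scaler_suml -sumrB -big_split /=; apply: eq_bigr => j _.
rewrite big_cons scalerDr; congr (_ + _).
by rewrite scalerBr !scalerA (andbC (t.1.2 == i)).
Qed.

Lemma br_form_sc_of_list f u v :
  br_form (sc_of_list l) f u v = \sum_(t <- l) wedge u v t.1.1 t.1.2 * (t.2 *m f) 0 0.
Proof.
rewrite /br_form lie_br_sc_of_list mulmx_suml summxE.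
by apply: eq_bigr => t _; rewrite -scalemxAl mxE.
Qed.

End StructureConstantLists.

Section N82Forms.
Variable F : fieldType.
Implicit Types (f g : 'cV[F]_8) (u v : 'rV[F]_8).

Definition xc u k := u 0 (inord (xi k)).
Definition xv k : 'rV[F]_8 := bvec F 8 (xi k).
Definition yval f k := (yv F k *m f) 0 0.
Definition xwedge u v a b := xc u a * xc v b - xc u b * xc v a.

Definition yfun (a b : F) : 'cV[F]_8 :=
  \col_(i < 8) if i == 6 :> nat then a else if i == 7 :> nat then b else 0.

Lemma xc_xv j k : (xi j < 8)%N -> xc (xv k) j = (xi j == xi k)%:R.
Proof. by move=> lt_j; rewrite /xc mxE inordK. Qed.

Lemma xcB u v k : xc (u - v) k = xc u k - xc v k.
Proof. by rewrite /xc !mxE. Qed.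

Lemma xcZ a u k : xc (a *: u) k = a * xc u k.
Proof. by rewrite /xc mxE. Qed.

Lemma yval_yfun1 a b : yval (yfun a b) 1 = a.
Proof. by rewrite /yval bvec_mulmx // mxE inordK. Qed.

Lemma yval_yfun2 a b : yval (yfun a b) 2 = b.
Proof. by rewrite /yval bvec_mulmx // mxE inordK. Qed.

Lemma br_form_N82_1 f u v : br_form (N82 F 1) f u v =
  yval f 1 * xwedge u v 1 2 + yval f 2 * xwedge u v 3 4
  + (yval f 1 + yval f 2) * xwedge u v 5 6.
Proof.
rewrite br_form_sc_of_list // !big_cons big_nil /= mulmxDl [(_ + _ : 'M[F]_1) 0 0]mxE.
by rewrite /yval /xwedge /xc /wedge /=; ring.
Qed.

Lemma br_form_N82_2 f u v : br_form (N82 F 2) f u v =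
  yval f 1 * (xwedge u v 5 2 + xwedge u v 6 1) + yval f 2 * (xwedge u v 5 3 + xwedge u v 6 4).
Proof.
by rewrite br_form_sc_of_list // !big_cons big_nil /= /yval /xwedge /xc /wedge /=; ring.
Qed.

Lemma br_form_N82_3 f u v : br_form (N82 F 3) f u v =
  yval f 1 * (xwedge u v 1 2 + xwedge u v 6 5) + yval f 2 * (xwedge u v 3 6 + xwedge u v 5 4).
Proof.
by rewrite br_form_sc_of_list // !big_cons big_nil /= /yval /xwedge /xc /wedge /=; ring.
Qed.

Lemma br_form_N82_4 f u v : br_form (N82 F 4) f u v =
  yval f 1 * (xwedge u v 1 2 + xwedge u v 3 6 + xwedge u v 5 4) + yval f 2 * xwedge u v 6 5.
Proof.
by rewrite br_form_sc_of_list // !big_cons big_nil /= /yval /xwedge /xc /wedge /=; ring.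
Qed.

Lemma br_form_N82_5 f u v : br_form (N82 F 5) f u v =
  yval f 1 * (xwedge u v 1 6 + xwedge u v 3 4 + xwedge u v 5 2)
  + yval f 2 * (xwedge u v 6 3 + xwedge u v 4 5).
Proof.
by rewrite br_form_sc_of_list // !big_cons big_nil /= /yval /xwedge /xc /wedge /=; ring.
Qed.

Lemma br_form_N82_split k f u v : br_form (N82 F k) f u v =
  yval f 1 * br_form (N82 F k) (yfun 1 0) u v + yval f 2 * br_form (N82 F k) (yfun 0 1) u v.
Proof.
case: k => [|[|[|[|[|[|k]]]]]];
  rewrite ?br_form_N82_1 ?br_form_N82_2 ?br_form_N82_3 ?br_form_N82_4 ?br_form_N82_5
          !yval_yfun1 !yval_yfun2; ring.
Qed.

Lemma central_N82 k u : (forall j, (0 < j <= 6)%N -> xc u j = 0) -> central (N82 F k) u.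
Proof.
move=> xc_u0 v; have u0 j : (j < 6)%N -> u 0 (inord j) = 0 by exact: (xc_u0 j.+1).
case: k => [|[|[|[|[|[|k]]]]]];
  rewrite /= lie_br_sc_of_list // !big_cons big_nil /wedge /= !u0 //;
  by rewrite !(mul0r, subrr, scale0r, addr0).
Qed.

Ltac expand_br_form :=
  rewrite ?br_form_N82_1 ?br_form_N82_2 ?br_form_N82_3 ?br_form_N82_4 ?br_form_N82_5
    /xwedge ?xcB ?xcZ ?xc_xv ?yval_yfun1 ?yval_yfun2 //=.

Lemma xc_eq0_of_radical c f u v k (a : F) : radical c f u -> a != 0 ->
  br_form c f u v = a * xc u k -> xc u k = 0.
Proof.
by move=> rad a_nz; rewrite rad => /esym/eqP; rewrite mulf_eq0 (negPf a_nz) => /eqP.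
Qed.

Ltac xc_eq0_from rad v a :=
  apply: (xc_eq0_of_radical (v := v) (a := a) rad); first by rewrite ?oppr_eq0.

Lemma homogeneous_system2_trivial (s t a b a' b' : F) : a * b' - a' * b != 0 ->
  s * a + t * a' = 0 -> s * b + t * b' = 0 -> s = 0 /\ t = 0.
Proof.
move=> det_nz e1 e2.
have s_det : s * (a * b' - a' * b) = b' * (s * a + t * a') - a' * (s * b + t * b') by ring.
have t_det : t * (a * b' - a' * b) = a * (s * b + t * b') - b * (s * a + t * a') by ring.
rewrite e1 e2 !mulr0 subr0 in s_det t_det.
by split; [move/eqP: s_det | move/eqP: t_det]; rewrite mulf_eq0 (negPf det_nz) orbF => /eqP.
Qed.

Lemma independent_yfun k a b a' b' : a * b' - a' * b != 0 ->
  independent_forms (N82 F k) (yfun 1 0) (yfun 0 1) ->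
  independent_forms (N82 F k) (yfun a b) (yfun a' b').
Proof.
move=> det_nz indep s t st0.
suff [] : s * a + t * a' = 0 /\ s * b + t * b' = 0 by exact: homogeneous_system2_trivial.
apply: indep => u v; rewrite -[RHS](st0 u v) (br_form_N82_split k (yfun a b)).
by rewrite (br_form_N82_split k (yfun a' b')) !yval_yfun1 !yval_yfun2; ring.
Qed.

Lemma three_degenerate_forms_of_yfun k t : t != 0 ->
  independent_forms (N82 F k) (yfun 1 0) (yfun 0 1) ->
  degenerate_form (N82 F k) (yfun 1 0) -> degenerate_form (N82 F k) (yfun 0 1) ->
  degenerate_form (N82 F k) (yfun 1 t) -> has_three_degenerate_forms (N82 F k).
Proof.
move=> t_nz indep d10 d01 d1t; exists (yfun 1 0), (yfun 0 1), (yfun 1 t).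
by split=> //; split=> //; apply: independent_yfun => //;
  rewrite !(mul0r, mulr0, mul1r, mulr1, subr0, sub0r, oppr_eq0, oner_eq0).
Qed.

Lemma not_independent_of_common_yval_eq0 k i f g : (i == 1) || (i == 2) ->
  yval f i = 0 -> yval g i = 0 -> ~ independent_forms (N82 F k) f g.
Proof.
case/orP=> /eqP-> f0 g0.
  apply: (not_independent_of_proportional (h := yfun 0 1) (a := yval f 2) (b := yval g 2)).
    by move=> u v; rewrite br_form_N82_split f0 mul0r add0r.
  by move=> u v; rewrite br_form_N82_split g0 mul0r add0r.
apply: (not_independent_of_proportional (h := yfun 1 0) (a := yval f 1) (b := yval g 1)).
  by move=> u v; rewrite br_form_N82_split f0 mul0r addr0.
by move=> u v; rewrite br_form_N82_split g0 mul0r addr0.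
Qed.

Lemma N82_1_radical_central f u :
  yval f 1 != 0 -> yval f 2 != 0 -> yval f 1 + yval f 2 != 0 ->
  radical (N82 F 1) f u -> central (N82 F 1) u.
Proof.
move=> L_nz M_nz LM_nz rad; apply: central_N82 => -[|[|[|[|[|[|[|j]]]]]]] // _.
- by xc_eq0_from rad (xv 2) (yval f 1); expand_br_form; ring.
- by xc_eq0_from rad (xv 1) (- yval f 1); expand_br_form; ring.
- by xc_eq0_from rad (xv 4) (yval f 2); expand_br_form; ring.
- by xc_eq0_from rad (xv 3) (- yval f 2); expand_br_form; ring.
- by xc_eq0_from rad (xv 6) (yval f 1 + yval f 2); expand_br_form; ring.
- by xc_eq0_from rad (xv 5) (- (yval f 1 + yval f 2)); expand_br_form; ring.
Qed.

Lemma N82_1_nondegenerate_form : 2%:R != 0 :> F -> has_nondegenerate_form (N82 F 1).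
Proof.
move=> two_nz; exists (yfun 1 1) => u; apply: N82_1_radical_central;
  by rewrite ?yval_yfun1 ?yval_yfun2 ?oner_eq0.
Qed.

Lemma N82_1_three_degenerate_forms : has_three_degenerate_forms (N82 F 1).
Proof.
apply: (three_degenerate_forms_of_yfun (t := -1)); first by rewrite oppr_eq0 oner_eq0.
- by apply: (independent_forms_of_dual (u1 := xv 1) (v1 := xv 2) (u2 := xv 3) (v2 := xv 4));
    expand_br_form; ring.
- by apply: (degenerate_form_of (u := xv 3) (g := yfun 0 1) (v := xv 4) (oner_neq0 F))
    => [v|]; expand_br_form; ring.
- by apply: (degenerate_form_of (u := xv 1) (g := yfun 1 0) (v := xv 2) (oner_neq0 F))
    => [v|]; expand_br_form; ring.
- by apply: (degenerate_form_of (u := xv 5) (g := yfun 1 0) (v := xv 6) (oner_neq0 F))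
    => [v|]; expand_br_form; ring.
Qed.

(* The witness is killed by f(y1) ξ2 + f(y2) ξ3, the only way x_2 and x_3 enter w_f. *)
Lemma N82_2_radical f : radical (N82 F 2) f (yval f 2 *: xv 2 - yval f 1 *: xv 3).
Proof. by move=> v; expand_br_form; ring. Qed.

Lemma N82_2_degenerate_form f :
  (yval f 1 != 0) || (yval f 2 != 0) -> degenerate_form (N82 F 2) f.
Proof.
move=> LM_nz; have [M0 | M_nz] := eqVneq (yval f 2) 0.
  have L_nz : yval f 1 != 0 by rewrite M0 eqxx orbF in LM_nz.
  apply: (degenerate_form_of (g := yfun 0 1) (v := xv 5) L_nz (N82_2_radical f)).
  by expand_br_form; rewrite M0; ring.
have nM_nz : - yval f 2 != 0 by rewrite oppr_eq0.
apply: (degenerate_form_of (g := yfun 1 0) (v := xv 5) nM_nz (N82_2_radical f)).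
by expand_br_form; ring.
Qed.

Lemma N82_2_no_nondegenerate_form : ~ has_nondegenerate_form (N82 F 2).
Proof.
case=> f rad_central.
have [/N82_2_degenerate_form [u /rad_central] //|] :=
  boolP ((yval f 1 != 0) || (yval f 2 != 0)).
rewrite negb_or !negbK => /andP[/eqP L0 /eqP M0].
have rad : radical (N82 F 2) f (xv 2) by move=> v; rewrite br_form_N82_split L0 M0; ring.
have m1_nz : -1 != 0 :> F by rewrite oppr_eq0 oner_eq0.
apply: (noncentral_of_br_form (f := yfun 1 0) (v := xv 5) m1_nz) (rad_central _ rad).
by expand_br_form; ring.
Qed.

Lemma N82_2_three_degenerate_forms : has_three_degenerate_forms (N82 F 2).
Proof.
apply: (three_degenerate_forms_of_yfun (oner_neq0 F)).
  by apply: (independent_forms_of_dual (u1 := xv 5) (v1 := xv 2) (u2 := xv 5) (v2 := xv 3));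
    expand_br_form; ring.
all: by apply: N82_2_degenerate_form; rewrite yval_yfun1 yval_yfun2 oner_eq0 ?orbT.
Qed.

Lemma N82_3_radical_central f u : yval f 1 != 0 -> yval f 2 != 0 ->
  radical (N82 F 3) f u -> central (N82 F 3) u.
Proof.
move=> L_nz M_nz rad.
have u5 : xc u 5 = 0 by xc_eq0_from rad (xv 4) (yval f 2); expand_br_form; ring.
have u6 : xc u 6 = 0 by xc_eq0_from rad (xv 3) (- yval f 2); expand_br_form; ring.
apply: central_N82 => -[|[|[|[|[|[|[|j]]]]]]] // _.
- by xc_eq0_from rad (xv 2) (yval f 1); expand_br_form; ring.
- by xc_eq0_from rad (xv 1) (- yval f 1); expand_br_form; ring.
- by xc_eq0_from rad (xv 6) (yval f 2); expand_br_form; rewrite u5; ring.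
- by xc_eq0_from rad (xv 5) (- yval f 2); expand_br_form; rewrite u6; ring.
Qed.

Lemma N82_3_two_degenerate_forms : has_two_degenerate_forms (N82 F 3).
Proof.
exists (yfun 1 0), (yfun 0 1); split.
- by apply: (degenerate_form_of (u := xv 3) (g := yfun 0 1) (v := xv 6) (oner_neq0 F))
    => [v|]; expand_br_form; ring.
- by apply: (degenerate_form_of (u := xv 1) (g := yfun 1 0) (v := xv 2) (oner_neq0 F))
    => [v|]; expand_br_form; ring.
- by apply: (independent_forms_of_dual (u1 := xv 1) (v1 := xv 2) (u2 := xv 3) (v2 := xv 6));
    expand_br_form; ring.
Qed.

Lemma N82_3_no_three_degenerate_forms : ~ has_three_degenerate_forms (N82 F 3).
Proof.
have vanish f : degenerate_form (N82 F 3) f -> yval f 1 = 0 \/ yval f 2 = 0.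
  case=> u rad u_nc; have [L0 | L_nz] := eqVneq (yval f 1) 0; first by left.
  have [M0 | M_nz] := eqVneq (yval f 2) 0; first by right.
  by case: u_nc; apply: N82_3_radical_central rad.
case=> f [g [h [/vanish f0 /vanish g0 /vanish h0 [fg fh gh]]]].
case: f0 g0 h0 => f0 [] g0 [] h0; by [
  apply: (not_independent_of_common_yval_eq0 _ f0 g0 fg) |
  apply: (not_independent_of_common_yval_eq0 _ f0 h0 fh) |
  apply: (not_independent_of_common_yval_eq0 _ g0 h0 gh)].
Qed.

Lemma no_two_degenerate_forms_of_radical_central k :
  (forall f u, yval f 1 != 0 -> radical (N82 F k) f u -> central (N82 F k) u) ->
  ~ has_two_degenerate_forms (N82 F k).
Proof.
move=> rad_central.
have vanish f : degenerate_form (N82 F k) f -> yval f 1 = 0.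
  by case=> u rad u_nc; apply/eqP/contraT => /rad_central/(_ rad)/u_nc.
case=> f [g [/vanish f0 /vanish g0]].
exact: (not_independent_of_common_yval_eq0 _ f0 g0).
Qed.

Lemma N82_4_radical_central f u : yval f 1 != 0 ->
  radical (N82 F 4) f u -> central (N82 F 4) u.
Proof.
move=> L_nz rad.
have u5 : xc u 5 = 0 by xc_eq0_from rad (xv 4) (yval f 1); expand_br_form; ring.
have u6 : xc u 6 = 0 by xc_eq0_from rad (xv 3) (- yval f 1); expand_br_form; ring.
apply: central_N82 => -[|[|[|[|[|[|[|j]]]]]]] // _.
- by xc_eq0_from rad (xv 2) (yval f 1); expand_br_form; ring.
- by xc_eq0_from rad (xv 1) (- yval f 1); expand_br_form; ring.
- by xc_eq0_from rad (xv 6) (yval f 1); expand_br_form; rewrite u5; ring.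
- by xc_eq0_from rad (xv 5) (- yval f 1); expand_br_form; rewrite u6; ring.
Qed.

Lemma N82_5_radical_central f u : yval f 1 != 0 ->
  radical (N82 F 5) f u -> central (N82 F 5) u.
Proof.
move=> L_nz rad.
have u6 : xc u 6 = 0 by xc_eq0_from rad (xv 1) (- yval f 1); expand_br_form; ring.
have u5 : xc u 5 = 0 by xc_eq0_from rad (xv 2) (yval f 1); expand_br_form; ring.
have u4 : xc u 4 = 0 by xc_eq0_from rad (xv 3) (- yval f 1); expand_br_form; rewrite u6; ring.
have u3 : xc u 3 = 0 by xc_eq0_from rad (xv 4) (yval f 1); expand_br_form; rewrite u5; ring.
apply: central_N82 => -[|[|[|[|[|[|[|j]]]]]]] // _.
- by xc_eq0_from rad (xv 6) (yval f 1); expand_br_form; rewrite u3; ring.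
- by xc_eq0_from rad (xv 5) (- yval f 1); expand_br_form; rewrite u4; ring.
Qed.

Lemma N82_4_rank2_form : has_rank2_form (N82 F 4).
Proof.
exists (yfun 0 1); split=> [|a b x d]; last by expand_br_form; ring.
exists (xv 6), (xv 5).
have -> : br_form (N82 F 4) (yfun 0 1) (xv 6) (xv 5) = 1 by expand_br_form; ring.
exact: oner_neq0.
Qed.

Lemma N82_5_no_rank2_form : ~ has_rank2_form (N82 F 5).
Proof.
case=> f [[u [v uv_nz]] pluecker].
have L0 : yval f 1 = 0.
  apply/eqP; rewrite -sqrf_eq0; apply/eqP.
  by rewrite -[RHS](pluecker (xv 1) (xv 6) (xv 3) (xv 4)); expand_br_form; ring.
have M0 : yval f 2 = 0.
  apply/eqP; rewrite -sqrf_eq0; apply/eqP.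
  by rewrite -[RHS](pluecker (xv 6) (xv 3) (xv 4) (xv 5)); expand_br_form; ring.
by move: uv_nz; rewrite br_form_N82_split L0 M0 !mul0r addr0 eqxx.
Qed.

Lemma N82_separated i j : 2%:R != 0 :> F -> (0 < i)%N -> (i < j)%N -> (j <= 5)%N ->
  exists2 P, lie_invariant P & P (N82 F i) /\ ~ P (N82 F j).
Proof.
move=> two_nz.
have nd_inv := @has_nondegenerate_form_invariant F 8.
have two_inv := @has_two_degenerate_forms_invariant F 8.
have three_inv := @has_three_degenerate_forms_invariant F 8.
have rank2_inv := @has_rank2_form_invariant F 8.
have nd_1 := N82_1_nondegenerate_form two_nz.
have no_nd_2 := N82_2_no_nondegenerate_form.
have three_1 := N82_1_three_degenerate_forms.
have three_2 := N82_2_three_degenerate_forms.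
have no_three_3 := N82_3_no_three_degenerate_forms.
have two_3 := N82_3_two_degenerate_forms.
have no_two_4 := no_two_degenerate_forms_of_radical_central N82_4_radical_central.
have no_two_5 := no_two_degenerate_forms_of_radical_central N82_5_radical_central.
have no_three_4 := contra_not (@has_two_of_three_degenerate_forms F 8 _) no_two_4.
have no_three_5 := contra_not (@has_two_of_three_degenerate_forms F 8 _) no_two_5.
have rank2_4 := N82_4_rank2_form.
have no_rank2_5 := N82_5_no_rank2_form.
case: i => [|[|[|[|[|i]]]]] //; case: j => [|[|[|[|[|[|j]]]]]] // _ _ _.
- by exists (has_nondegenerate_form (n := 8)).
- by exists (has_three_degenerate_forms (n := 8)).
- by exists (has_three_degenerate_forms (n := 8)).
- by exists (has_three_degenerate_forms (n := 8)).
- by exists (has_three_degenerate_forms (n := 8)).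
- by exists (has_three_degenerate_forms (n := 8)).
- by exists (has_three_degenerate_forms (n := 8)).
- by exists (has_two_degenerate_forms (n := 8)).
- by exists (has_two_degenerate_forms (n := 8)).
- by exists (has_rank2_form (n := 8)).
Qed.

End N82Forms.

Theorem theorem2 (R : realType) (i j : nat) :
  (1 <= i <= 5)%N -> (1 <= j <= 5)%N -> i <> j ->
  ~ lie_isomorphic (N82 (R[i])%C i) (N82 (R[i])%C j).
Proof.
have two_nz : 2%:R != 0 :> R[i] by rewrite pnatr_eq0.
wlog lt_ij : i j / (i < j)%N => [sep_lt hi hj ne_ij | /andP[i_gt0 _] /andP[_ j_le5] _ iso].
  case: (ltngtP i j) => [lt_ij | lt_ji | /ne_ij[]]; first exact: sep_lt.
  by move/lie_isomorphic_sym; apply: sep_lt => // eq_ji; apply: ne_ij.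
have [P P_inv [Pi not_Pj]] := N82_separated two_nz i_gt0 lt_ij j_le5.
exact: not_Pj (P_inv _ _ iso Pi).
Qed.
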